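(* Consider the closed-loop system described in the context, with fixed matrices $A,E,C,D,B$ and gains $K_0,K_1,K_2$, and with $c(\sigma)=\|\sigma\|^{-1/2}+\alpha$ for a given $\alpha>0$. Let $v(\zeta)=\zeta^TS\zeta$ and $V(x)=x^TR(\sigma)PR(\sigma)x$. If the matrix inequality $$\begin{bmatrix} A^TS+SA+\rho S & \bullet \\ \alpha^{-1}G_0^TE^TS & -\rho P\end{bmatrix}<0$$ is satisfied for scalars $\alpha>0$, $\rho>0$ and symmetric matrices $S\in\mathbb{R}^{r\times r}$, $S>0$, $P\in\mathbb{R}^{2n\times 2n}$, $P>0$, then along arbitrary trajectories of the linear subsystem $\dot\zeta=A\zeta+E\sigma$ (with $\sigma=G_0x$) the inequality $$\dot v<\rho\,(V-v)$$ holds for all $0\neq\zeta\in\mathbb{R}^r$ and all $0\neq x\in\mathbb{R}^{2n}$.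
   Context: Closed-loop system: $\dot\zeta=A\zeta+E\sigma$, $\dot\sigma=C\zeta+D\sigma+Bu+f(t)$, $\dot\eta=c(\sigma)^2\sigma$, $u=K_0\zeta+c(\sigma)K_1\sigma+K_2\eta$, with $\zeta\in\mathbb{R}^r$, $\sigma,\eta\in\mathbb{R}^n$, $u\in\mathbb{R}^m$, $A\in\mathbb{R}^{r\times r}$ Hurwitz, $E\in\mathbb{R}^{r\times n}$, $C\in\mathbb{R}^{n\times r}$, $D\in\mathbb{R}^{n\times n}$, $B\in\mathbb{R}^{n\times m}$ of full row rank, $f:\mathbb{R}_+\to\mathbb{R}^n$ smooth, and $c(\sigma)=1/\sqrt{\|\sigma\|}+\alpha$, $\alpha>0$. Solutions are understood in the sense of Filippov. $BK_2$ is assumed nonsingular, $z=\eta+(BK_2)^{-1}f(t)$ and $x=[\sigma^T\ z^T]^T\in\mathbb{R}^{2n}$. $R(\sigma)=\mathrm{diag}(c(\sigma)I_n,I_n)$, $G_0=[I_n\ \ 0]\in\mathbb{R}^{n\times 2n}$ (so $\sigma=G_0x$). The symbol $\bullet$ denotes the symmetric block. $\|\cdot\|$ is the Euclidean norm. *)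

From mathcomp Require Import all_boot all_order all_algebra.
Set Implicit Arguments. Unset Strict Implicit. Unset Printing Implicit Defensive.
Import Order.TTheory GRing.Theory Num.Theory.
Local Open Scope ring_scope.

Section Defs.
Variable R : rcfType.

Definition qform (k : nat) (M : 'M[R]_k) (w : 'cV[R]_k) : R := (w^T *m M *m w) 0 0.

(* M > 0 : positive definite (symmetry is assumed separately) *)
Definition posdef (k : nat) (M : 'M[R]_k) : Prop :=
  forall w : 'cV[R]_k, w != 0 -> 0 < qform M w.

Definition negdef (k : nat) (M : 'M[R]_k) : Prop :=
  forall w : 'cV[R]_k, w != 0 -> qform M w < 0.

Definition enorm (k : nat) (s : 'cV[R]_k) : R := Num.sqrt ((s^T *m s) 0 0).

Definition G0 (n : nat) : 'M[R]_(n, n + n) := row_mx 1%:M 0.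

(* c(sigma) = ||sigma||^(-1/2) + alpha  (with the MathComp convention 0^-1 = 0) *)
Definition cfun (alpha : R) (n : nat) (s : 'cV[R]_n) : R :=
  (Num.sqrt (enorm s))^-1 + alpha.

Definition Rmat (alpha : R) (n : nat) (s : 'cV[R]_n) : 'M[R]_(n + n) :=
  block_mx ((cfun alpha s)%:M) 0 0 1%:M.

Definition vfun (r : nat) (S : 'M[R]_r) (zeta : 'cV[R]_r) : R := qform S zeta.

Definition Vfun (alpha : R) (n : nat) (P : 'M[R]_(n + n)) (x : 'cV[R]_(n + n)) : R :=
  let Rs := Rmat alpha (G0 n *m x) in qform (Rs *m P *m Rs) x.

(* time derivative of v along the linear subsystem zeta' = A zeta + E sigma,
   sigma = G0 x:  vdot = grad v . (A zeta + E G0 x) *)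
Definition vdot (r n : nat) (A S : 'M[R]_r) (E : 'M[R]_(r, n))
  (zeta : 'cV[R]_r) (x : 'cV[R]_(n + n)) : R :=
  (zeta^T *m S *m (A *m zeta + E *m (G0 n *m x))) 0 0
  + ((A *m zeta + E *m (G0 n *m x))^T *m S *m zeta) 0 0.
End Defs.

(* Evaluate the matrix inequality at [(zeta, y)] with
   [y = (alpha / c(sigma)) R(sigma) x].  Since [G0 R(sigma) = c(sigma) G0],
   [G0 y = alpha sigma], so the off-diagonal blocks produce exactly the cross
   terms of [vdot] and the inequality reads
   [vdot + rho v - rho (alpha / c(sigma))^2 V < 0].  As [c(sigma) >= alpha]
   and [V >= 0], the last term is at least [- rho V]. *)

From mathcomp Require Import all_boot all_order all_algebra.
From mathcomp Require Import ring lra.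
Set Implicit Arguments. Unset Strict Implicit. Unset Printing Implicit Defensive.
Import Order.TTheory GRing.Theory Num.Theory.
Local Open Scope ring_scope.

Section QuadraticForms.
Variable R : rcfType.

Lemma addmx_entry (m p : nat) (M N : 'M[R]_(m, p)) i j :
  (M + N) i j = M i j + N i j.
Proof. by rewrite mxE. Qed.

Lemma scalemx_entry (m p : nat) (a : R) (M : 'M[R]_(m, p)) i j :
  (a *: M) i j = a * M i j.
Proof. by rewrite mxE. Qed.

Lemma qformD (k : nat) (M N : 'M[R]_k) (w : 'cV[R]_k) :
  qform (M + N) w = qform M w + qform N w.
Proof. by rewrite /qform mulmxDr mulmxDl addmx_entry. Qed.

Lemma qformZ (k : nat) (a : R) (M : 'M[R]_k) (w : 'cV[R]_k) :
  qform (a *: M) w = a * qform M w.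
Proof. by rewrite /qform -scalemxAr -scalemxAl scalemx_entry. Qed.

Lemma qformN (k : nat) (M : 'M[R]_k) (w : 'cV[R]_k) :
  qform (- M) w = - qform M w.
Proof. by rewrite -scaleN1r qformZ mulN1r. Qed.

Lemma qform_scale (k : nat) (M : 'M[R]_k) (a : R) (w : 'cV[R]_k) :
  qform M (a *: w) = a ^+ 2 * qform M w.
Proof.
rewrite /qform [(a *: w)^T]linearZ -!scalemxAl -!scalemxAr scalerA.
by rewrite scalemx_entry expr2.
Qed.

Lemma qform_block_col (m p : nat) (A : 'M[R]_m) (B : 'M[R]_(m, p))
  (C : 'M[R]_(p, m)) (D : 'M[R]_p) (u : 'cV[R]_m) (v : 'cV[R]_p) :
  qform (block_mx A B C D) (col_mx u v)
  = qform A u + (u^T *m B *m v) 0 0 + (v^T *m C *m u) 0 0 + qform D v.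
Proof.
rewrite /qform tr_col_mx mul_row_block mul_row_col !mulmxDl !addmx_entry.
by rewrite addrACA !addrA.
Qed.

Lemma posdef_qform_ge0 (k : nat) (M : 'M[R]_k) (w : 'cV[R]_k) :
  posdef M -> 0 <= qform M w.
Proof.
move=> pM; have [->|w0] := eqVneq w 0; last exact/ltW/pM.
by rewrite /qform mulmx0 mxE.
Qed.

End QuadraticForms.

Section ClosedLoop.
Variables (R : rcfType) (n : nat) (alpha : R).

Lemma cfun_ge (s : 'cV[R]_n) : alpha <= cfun alpha s.
Proof. by rewrite /cfun lerDr invr_ge0 sqrtr_ge0. Qed.

Lemma tr_Rmat (s : 'cV[R]_n) : (Rmat alpha s)^T = Rmat alpha s.
Proof. by rewrite /Rmat tr_block_mx !trmx0 tr_scalar_mx trmx1. Qed.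

Lemma G0_Rmat (s : 'cV[R]_n) :
  G0 R n *m Rmat alpha s = cfun alpha s *: G0 R n.
Proof.
rewrite /Rmat /G0 mul_row_block !mul0mx !mulmx0 !addr0 mul1mx.
by rewrite scale_row_mx scaler0 scalemx1.
Qed.

Lemma VfunE (P : 'M[R]_(n + n)) (x : 'cV[R]_(n + n)) :
  Vfun alpha P x = qform P (Rmat alpha (G0 R n *m x) *m x).
Proof. by rewrite /Vfun /qform trmx_mul tr_Rmat !mulmxA. Qed.

Lemma qform_lmi_block (r : nat) (A S : 'M[R]_r) (E : 'M[R]_(r, n)) (rho : R)
    (P : 'M[R]_(n + n)) (zeta : 'cV[R]_r) (x y : 'cV[R]_(n + n)) :
  alpha != 0 -> G0 R n *m y = alpha *: (G0 R n *m x) ->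
  qform (block_mx (A^T *m S + S *m A + rho *: S)
                  (alpha^-1 *: (S *m E *m G0 R n))
                  (alpha^-1 *: ((G0 R n)^T *m E^T *m S))
                  (- (rho *: P))) (col_mx zeta y)
  = vdot A S E zeta x + rho * vfun S zeta - rho * qform P y.
Proof.
move=> a0 hy; set s := G0 R n *m x.
have cross12 : zeta^T *m (alpha^-1 *: (S *m E *m G0 R n)) *m y
             = zeta^T *m S *m E *m s.
  rewrite -scalemxAr -scalemxAl -!mulmxA hy -!scalemxAr.
  by rewrite scalerA mulVf // scale1r.
have cross21 : y^T *m (alpha^-1 *: ((G0 R n)^T *m E^T *m S)) *m zeta
             = s^T *m E^T *m S *m zeta.
  rewrite -scalemxAr -scalemxAl !mulmxA -trmx_mul hy linearZ /=.
  by rewrite -!scalemxAl scalerA mulVf // scale1r.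
rewrite qform_block_col cross12 cross21 !qformD qformN !qformZ /vfun.
rewrite /vdot -/s /qform [(_ + _)^T]linearD /= !trmx_mul.
rewrite !mulmxDl !mulmxDr !mulmxA !addmx_entry.
ring.
Qed.

End ClosedLoop.

Theorem lemma1 (R : rcfType) (r n : nat) (A : 'M[R]_r) (E : 'M[R]_(r, n))
  (alpha rho : R) (S : 'M[R]_r) (P : 'M[R]_(n + n)) :
  0 < alpha -> 0 < rho ->
  S^T = S -> posdef S -> P^T = P -> posdef P ->
  negdef (block_mx (A^T *m S + S *m A + rho *: S)
                   (alpha^-1 *: (S *m E *m G0 R n))
                   (alpha^-1 *: ((G0 R n)^T *m E^T *m S))
                   (- (rho *: P))) ->
  forall (zeta : 'cV[R]_r) (x : 'cV[R]_(n + n)),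
    zeta != 0 -> x != 0 ->
    vdot A S E zeta x < rho * (Vfun alpha P x - vfun S zeta).
Proof.
move=> a_gt0 rho_gt0 _ _ _ P_pd lmi zeta x zeta_neq0 _.
set s := G0 R n *m x; set c := cfun alpha s.
have c_gt0 : 0 < c := lt_le_trans a_gt0 (cfun_ge alpha s).
set k := alpha / c; set y := k *: (Rmat alpha s *m x).
have k_ge0 : 0 <= k by rewrite divr_ge0 // ltW.
have k_le1 : k <= 1 by rewrite ler_pdivrMr // mul1r cfun_ge.
have Gy : G0 R n *m y = alpha *: s.
  rewrite -scalemxAr mulmxA G0_Rmat -scalemxAl scalerA.
  by rewrite /k mulfVK ?gt_eqF.
have Py : qform P y = k ^+ 2 * Vfun alpha P x by rewrite qform_scale VfunE.
have := lmi (col_mx zeta y); rewrite col_mx_eq0 negb_and zeta_neq0 => /(_ isT).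
rewrite (qform_lmi_block A S E rho P zeta (lt0r_neq0 a_gt0) Gy) Py.
have V_ge0 : 0 <= Vfun alpha P x by rewrite VfunE posdef_qform_ge0.
have shrink : rho * (k ^+ 2 * Vfun alpha P x) <= rho * Vfun alpha P x.
  by rewrite ler_pM2l // ler_piMl // expr_le1.
lra.
Qed.
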